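(* Let $G$ be a strongly connected directed co-graph with co-tree $T$ and let $\hat{w}$ be an inner node of $T$. Then there is no vertex $w\in V(G)\setminus V(G_{\hat{w}})$ that resolves two vertices of $V(G_{\hat{w}})$ in $G$.
   Context: All graphs are finite and simple. For vertices $u,v$ of a directed graph $G$, $d_G(u,v)$ is the length of a shortest directed path from $u$ to $v$ (undefined if none exists); $G$ is strongly connected if directed paths exist in both directions between any two vertices. A vertex $w$ resolves two distinct vertices $u,v$ in $G$ if $w=u$, or $w=v$, or there are paths from $w$ to $u$ and from $w$ to $v$ with $d_G(w,u)\neq d_G(w,v)$. Directed co-graphs and their co-trees are defined recursively: a single vertex $u$ is a directed co-graph whose co-tree is a single node (a leaf) associated with $u$. If $G_1,G_2$ are directed co-graphs on disjoint vertex sets with co-trees $T_1,T_2$ (roots $\hat{l},\hat{r}$), then the disjoint union $G_1\cup G_2$ (edge set $E(G_1)\cup E(G_2)$), the join $G_1\times G_2$ (additionally all edges $(u,v),(v,u)$ with $u\in V(G_1),v\in V(G_2)$) and the directed join $G_1\gg G_2$ (additionally all edges $(u,v)$ with $u\in V(G_1),v\in V(G_2)$), each on vertex set $V(G_1)\cup V(G_2)$, are directed co-graphs; the co-tree is obtained from $T_1,T_2$ by adding a new root labelled $\cup$, $\times$ or $\gg$ respectively, with left successor $\hat{l}$ and right successor $\hat{r}$. Non-leaf nodes are inner nodes. For a node $\hat{w}$ of $T$, $G_{\hat{w}}$ denotes the subgraph of $G$ induced by the vertices associated with the leaves of the subtree of $T$ rooted at $\hat{w}$. *)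

From mathcomp Require Import all_boot.
Set Implicit Arguments. Unset Strict Implicit. Unset Printing Implicit Defensive.

Inductive cotree (V : Type) : Type :=
| Leaf of V
| UnionN of cotree V & cotree V
| JoinN of cotree V & cotree V
| DJoinN of cotree V & cotree V.

Arguments Leaf {V}. Arguments UnionN {V}. Arguments JoinN {V}. Arguments DJoinN {V}.

Section Cograph.
Variable V : eqType.

(* vertex set of the co-graph (vertices associated with the leaves) *)
Fixpoint leaves (t : cotree V) : seq V :=
  match t with
  | Leaf u => [:: u]
  | UnionN l r | JoinN l r | DJoinN l r => leaves l ++ leaves r
  end.

(* well-formedness: the vertex sets combined at each node are disjoint *)
Definition wf_cotree (t : cotree V) : bool := uniq (leaves t).

Fixpoint edge (t : cotree V) : rel V :=
  match t with
  | Leaf _ => fun _ _ => false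
  | UnionN l r => fun x y => edge l x y || edge r x y
  | JoinN l r => fun x y =>
      [|| edge l x y, edge r x y,
          (x \in leaves l) && (y \in leaves r)
        | (x \in leaves r) && (y \in leaves l)]
  | DJoinN l r => fun x y =>
      [|| edge l x y, edge r x y | (x \in leaves l) && (y \in leaves r)]
  end.

(* a directed walk x = x0 -> x1 -> ... -> xk = y; its length is size p *)
Definition dwalk (t : cotree V) (x y : V) (p : seq V) : bool :=
  path (edge t) x p && (last x p == y).

Definition reachable (t : cotree V) (x y : V) : Prop :=
  exists p, dwalk t x y p.

Definition is_dist (t : cotree V) (x y : V) (n : nat) : Prop :=
  (exists p, dwalk t x y p /\ size p = n) /\
  (forall p, dwalk t x y p -> n <= size p).

Definition strongly_connected (t : cotree V) : Prop :=
  forall x y, x \in leaves t -> y \in leaves t -> reachable t x y.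

Definition resolves (t : cotree V) (w u v : V) : Prop :=
  w = u \/ w = v \/
  exists du dv, [/\ is_dist t w u du, is_dist t w v dv & du <> dv].

(* s is (the subtree rooted at) a node of the co-tree t *)
Inductive subtree (s : cotree V) : cotree V -> Prop :=
| sub_refl : subtree s s
| sub_UL l r : subtree s l -> subtree s (UnionN l r)
| sub_UR l r : subtree s r -> subtree s (UnionN l r)
| sub_JL l r : subtree s l -> subtree s (JoinN l r)
| sub_JR l r : subtree s r -> subtree s (JoinN l r)
| sub_DL l r : subtree s l -> subtree s (DJoinN l r)
| sub_DR l r : subtree s r -> subtree s (DJoinN l r).

Definition inner (s : cotree V) : Prop :=
  match s with Leaf _ => False | _ => True end.

End Cograph.

(* The vertices below an inner node of the co-tree form a module: every edge
   entering them from outside is created at some ancestor node, and that node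
   joins the outside vertex to all of them at once.  Hence a shortest walk from
   an outside vertex w to one vertex of the module can be cut at its first
   vertex inside the module and redirected to any other one, so w is at the
   same distance from all of them and resolves none of their pairs. *)

From mathcomp Require Import all_boot.

Set Implicit Arguments.
Unset Strict Implicit.
Unset Printing Implicit Defensive.

Lemma uniq_cat_notin (T : eqType) (s1 s2 : seq T) x :
  uniq (s1 ++ s2) -> x \in s1 -> x \notin s2.
Proof.
by rewrite cat_uniq => /and3P[_ /hasPn disj _] x1; apply/negP => /disj; rewrite x1.
Qed.

Section Cograph.
Variable V : eqType.
Implicit Types (t s : cotree V) (S : seq V).

Lemma edge_leaves t x y : edge t x y -> (x \in leaves t) && (y \in leaves t).
Proof.
elim: t x y => [a|l IHl r IHr|l IHl r IHr|l IHl r IHr] x y //=;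
  rewrite !mem_cat.
- by case/orP => [/IHl|/IHr] /andP[-> ->]; rewrite ?orbT.
- by case/or4P => [/IHl/andP[-> ->]|/IHr/andP[-> ->]|/andP[-> ->]|/andP[-> ->]];
    rewrite ?orbT.
- by case/or3P => [/IHl/andP[-> ->]|/IHr/andP[-> ->]|/andP[-> ->]];
    rewrite ?orbT.
Qed.

Lemma edge_notin_src t x y : x \notin leaves t -> edge t x y = false.
Proof. by move=> /negbTE xt; apply/negP => /edge_leaves; rewrite xt. Qed.

Lemma edge_notin_dst t x y : y \notin leaves t -> edge t x y = false.
Proof. by move=> /negbTE yt; apply/negP => /edge_leaves; rewrite yt andbF. Qed.

Lemma subtree_leaves s t : subtree s t -> {subset leaves s <= leaves t}.
Proof. by elim=> //= l r _ sub x /sub; rewrite mem_cat => ->; rewrite ?orbT. Qed.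

(* Induction on the position of s in t: at a node above s, the membership of
   u in the other child is false, so the node contributes the same edges from
   x to u as to any other vertex of s. *)
Lemma subtree_edge_uniform s t x u v : subtree s t -> wf_cotree t ->
  x \notin leaves s -> u \in leaves s -> v \in leaves s ->
  edge t x u = edge t x v.
Proof.
move=> sub_st; elim: sub_st x u v =>
  [|l r sub IH|l r sub IH|l r sub IH|l r sub IH|l r sub IH|l r sub IH] x u v
  wf_t xs us vs.
  by rewrite !edge_notin_src.
all: have [us' vs'] := (subtree_leaves sub us, subtree_leaves sub vs).
all: have wf_lr : uniq (leaves l ++ leaves r) by [].
all: have wf_rl : uniq (leaves r ++ leaves l) by rewrite uniq_catC.
all: have := wf_lr; rewrite cat_uniq => /and3P[wf_l _ wf_r].
1,3,5: have [ur vr] := (uniq_cat_notin wf_lr us', uniq_cat_notin wf_lr vs');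
  by rewrite /= !(edge_notin_dst x ur, edge_notin_dst x vr) ?us' ?vs'
       ?(negbTE ur) ?(negbTE vr) (IH x u v wf_l xs us vs).
all: have [ul vl] := (uniq_cat_notin wf_rl us', uniq_cat_notin wf_rl vs');
  by rewrite /= !(edge_notin_dst x ul, edge_notin_dst x vl) ?us' ?vs'
       ?(negbTE ul) ?(negbTE vl) (IH x u v wf_r xs us vs).
Qed.

Lemma dwalk_cons t a b y p : dwalk t a b (y :: p) = edge t a y && dwalk t y b p.
Proof. by rewrite /dwalk /= andbA. Qed.

Section UniformEntry.
Variables (t : cotree V) (S : seq V).
Hypothesis edge_uniform : forall x u v,
  x \notin S -> u \in S -> v \in S -> edge t x u = edge t x v.

Lemma dwalk_retarget a b c p : a \notin S -> b \in S -> c \in S ->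
  dwalk t a b p -> exists2 q, dwalk t a c q & size q <= size p.
Proof.
move=> + bS cS; elim: p a => [|y p IH] a aS.
  by rewrite /dwalk /= => /eqP eq_ab; rewrite eq_ab bS in aS.
rewrite dwalk_cons => /andP[ay walk_y].
have [yS|yS] := boolP (y \in S).
  by exists [:: c]; rewrite // dwalk_cons /dwalk /= eqxx !andbT
    -(edge_uniform aS yS cS).
have [q walk_q le_qp] := IH y yS walk_y.
by exists (y :: q); rewrite ?dwalk_cons ?ay.
Qed.

Lemma is_dist_uniform a u v du dv : a \notin S -> u \in S -> v \in S ->
  is_dist t a u du -> is_dist t a v dv -> du = dv.
Proof.
move=> aS uS vS [[p [walk_p <-]] min_u] [[q [walk_q <-]] min_v].
apply/eqP; rewrite eqn_leq.
have [p' walk_p' le_p'q] := dwalk_retarget aS vS uS walk_q.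
have [q' walk_q' le_q'p] := dwalk_retarget aS uS vS walk_p.
by rewrite (leq_trans (min_u _ walk_p') le_p'q) (leq_trans (min_v _ walk_q')).
Qed.

Lemma not_resolves_uniform w u v : w \notin S -> u \in S -> v \in S ->
  ~ resolves t w u v.
Proof.
move=> wS uS vS [eq_wu|[eq_wv|[du [dv [dist_u dist_v]]]]].
- by rewrite eq_wu uS in wS.
- by rewrite eq_wv vS in wS.
- by apply; apply: is_dist_uniform dist_u dist_v.
Qed.

End UniformEntry.
End Cograph.

Theorem lemma1 (V : eqType) (t s : cotree V) :
  wf_cotree t -> strongly_connected t ->
  subtree s t -> inner s ->
  ~ (exists w u v,
       [/\ w \in leaves t, w \notin leaves s,
           u \in leaves s, v \in leaves s & u != v] /\ resolves t w u v).
Proof.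
move=> wf_t _ sub_st _ [w [u [v [[_ ws us vs _] res]]]].
apply: (not_resolves_uniform _ ws us vs res) => x u' v'.
exact: subtree_edge_uniform.
Qed.
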